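(* Let $\mathcal{M}=(S,E,T)$ be a trivially parametric Markov chain satisfying the standing assumptions below. Then every never-worse equivalence class that contains neither $\mathit{fin}$ nor $\mathit{fail}$ has exactly one exit.
   Context: A trivially parametric Markov chain $\mathcal{M}=(S,E,T)$ consists of a finite set of states $S$, targets $T=\{\mathit{fin},\mathit{fail}\}$ with no outgoing edges, and edges $E\subseteq(S\setminus T)\times S$. A graph-preserving valuation assigns to each non-target $s$ a full-support probability distribution on its successor set $sE$; $P_{\mathsf{val}}(s)$ is the probability of reaching $\mathit{fin}$ from $s$. $s\sim s'$ iff $P_{\mathsf{val}}(s)=P_{\mathsf{val}}(s')$ for all graph-preserving valuations; equivalence classes are the classes of $\sim$. A state $s$ is an exit of $U\subseteq S$ if $s\in U$ and $sE\not\subseteq U$. Standing assumptions: the equivalence classes of $\mathit{fin}$ and $\mathit{fail}$ are $\{\mathit{fin}\}$ and $\{\mathit{fail}\}$; no state has a self-loop; every non-target state has exactly two successors. *)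

From HB Require Import structures.
From mathcomp Require Import all_boot all_order all_algebra.
From mathcomp Require Import all_classical all_reals all_analysis.
Set Implicit Arguments. Unset Strict Implicit. Unset Printing Implicit Defensive.
Import Order.TTheory GRing.Theory Num.Theory numFieldNormedType.Exports.
Local Open Scope ring_scope.

Section MC.
Variables (R : realType) (S : finType) (E : rel S) (fin fail : S).

Definition is_target (s : S) : bool := (s == fin) || (s == fail).

Definition graph_preserving (val : S -> S -> R) : Prop :=
  forall s, ~~ is_target s ->
    [/\ forall t, E s t -> 0 < val s t,
        forall t, ~~ E s t -> val s t = 0
      & \sum_(t : S) val s t = 1].

Fixpoint reach_n (val : S -> S -> R) (n : nat) (s : S) : R :=
  if s == fin then 1
  else if s == fail then 0
  else match n with
       | 0 => 0
       | n'.+1 => \sum_(t : S) val s t * reach_n val n' t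
       end.

Definition Pval (val : S -> S -> R) (s : S) : R :=
  limn (fun n => reach_n val n s).

Definition equiv (s s' : S) : Prop :=
  forall val, graph_preserving val -> Pval val s = Pval val s'.

Definition eq_class (s : S) : {set S} := [set t | `[< equiv s t >]].

Definition is_exit (U : {set S}) (s : S) : bool :=
  (s \in U) && ~~ [forall t, E s t ==> (t \in U)].

End MC.

From Pilot Require Import Defs.
From HB Require Import structures.
From mathcomp Require Import all_boot all_order all_algebra.
From mathcomp Require Import all_classical all_reals all_analysis.
From mathcomp Require Import lra.

(* Let C be a class containing neither fin nor fail. A state that cannot reach
   fin has reachability probability 0 under every valuation, so it is
   equivalent to fail; as the class of fail is {fail}, every state of C reaches
   fin, and a path from C to fin leaves C through an exit.
   Let u <> v be two exits. Cutting a path to fin at its last visits to u and v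
   shows that one of them, say v, reaches fin without passing through the other.
   Pick a successor a of u outside C and a valuation val with P(a) <> P(u), and
   move half of the mass of u onto the edge (u, a). The difference of the two
   reachability functions is val-harmonic away from u, vanishes on the targets
   and takes the same value at u and v, which lie in one class. A maximum
   principle along a u-avoiding path from v to fin makes it vanish, so
   P(u) = (P(u) + P(a)) / 2, i.e. P(a) = P(u): a contradiction. *)

Set Implicit Arguments. Unset Strict Implicit. Unset Printing Implicit Defensive.
Import Order.TTheory GRing.Theory Num.Theory numFieldNormedType.Exports.
Local Open Scope ring_scope.

Section Avoid.
Variable T : finType.
Implicit Types (e : rel T) (C : {set T}) (u x z : T).

Definition avoid e u : rel T := [rel x y | e x y && (y != u)].

Lemma connect_invariant e (a : pred T) x z :
  (forall x y, e x y -> a x -> a y) -> connect e x z -> a x -> a z.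
Proof.
move=> ea /connectP[p + ->]; elim: p x => //= y p IHp x /andP[exy eyp] ax.
exact: IHp eyp (ea _ _ exy ax).
Qed.

Lemma connect_last_visit e u x z :
  connect e x z -> connect (avoid e u) x z || connect (avoid e u) u z.
Proof.
case/connectP=> p + ->; elim: p x => [|y p IHp] x /=; first by rewrite connect0.
case/andP=> exy /IHp /orP[ryz|->]; last by rewrite orbT.
have [yu|yu] := eqVneq y u; first by subst y; rewrite ryz orbT.
by rewrite (connect_trans _ ryz) // connect1 //= /avoid /= exy.
Qed.

Lemma connect_avoid_either e u1 u2 z :
  connect e u1 z -> connect (avoid e u2) u1 z || connect (avoid e u1) u2 z.
Proof.
move=> r.
have r1 : connect (avoid e u1) u1 z by case/orP: (connect_last_visit u1 r).
case/orP: (connect_last_visit u2 r1) => r2; apply/orP; [left|right];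
  apply: connect_sub r2 => x y /andP[/andP[exy yu1] yu2];
  by rewrite connect1 //= /avoid /= exy ?yu1 ?yu2.
Qed.

Lemma is_exitP e C u :
  reflect (u \in C /\ exists2 a, e u a & a \notin C) (is_exit e C u).
Proof.
apply: (iffP andP) => -[uC ex]; split=> //.
  by case/forallPn: ex => a; rewrite negb_imply => /andP[eua aC]; exists a.
by case: ex => a eua aC; apply/forallPn; exists a; rewrite negb_imply eua.
Qed.

Lemma connect_exit e C x z :
  connect e x z -> x \in C -> z \notin C -> exists u, is_exit e C u.
Proof.
move=> rxz xC /negP zC; apply: contrapT => no_exit; apply: zC.
apply: connect_invariant rxz xC => y y' eyy' yC; apply/negPn/negP => y'C.
by apply: no_exit; exists y; apply/is_exitP; split=> //; exists y'.
Qed.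

End Avoid.

Section Reachability.
Variables (R : realType) (S : finType) (E : rel S) (fin fail : S).
Hypothesis fin_neq_fail : fin != fail.
Variable val : S -> S -> R.
Hypothesis val_gp : graph_preserving E fin fail val.
Local Open Scope classical_set_scope.

Lemma val_ge0 t s : ~~ is_target fin fail t -> 0 <= val t s.
Proof.
move=> nt; have [val_gt0 val_eq0 _] := val_gp nt.
by have [/val_gt0/ltW|/val_eq0->] := boolP (E t s).
Qed.

Lemma reach_n_fin n : reach_n fin fail val n fin = 1.
Proof. by case: n => /=; rewrite eqxx. Qed.

Lemma reach_n_fail n : reach_n fin fail val n fail = 0.
Proof. by case: n => /=; rewrite eq_sym (negbTE fin_neq_fail) eqxx. Qed.

Lemma reach_n0 t : ~~ is_target fin fail t -> reach_n fin fail val 0 t = 0.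
Proof. by rewrite negb_or => /andP[/negbTE/= -> /negbTE ->]. Qed.

Lemma reach_nS n t : ~~ is_target fin fail t ->
  reach_n fin fail val n.+1 t = \sum_s val t s * reach_n fin fail val n s.
Proof. by rewrite negb_or => /andP[/negbTE/= -> /negbTE ->]. Qed.

Lemma reach_n_ge0 n t : 0 <= reach_n fin fail val n t.
Proof.
elim: n t => [|n IHn] t; have [/orP[]/eqP->|nt] := boolP (is_target fin fail t);
  rewrite ?reach_n_fin ?reach_n_fail ?reach_n0 ?reach_nS ?ler01 //.
by apply: sumr_ge0 => s _; rewrite mulr_ge0 ?val_ge0.
Qed.

Lemma reach_n_le1 n t : reach_n fin fail val n t <= 1.
Proof.
elim: n t => [|n IHn] t; have [/orP[]/eqP->|nt] := boolP (is_target fin fail t);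
  rewrite ?reach_n_fin ?reach_n_fail ?reach_n0 ?reach_nS ?ler01 //.
have [_ _ <-] := val_gp nt.
by apply: ler_sum => s _; rewrite ler_piMr ?val_ge0.
Qed.

Lemma reach_n_nondecreasing t : nondecreasing_seq (reach_n fin fail val ^~ t).
Proof.
apply/nondecreasing_seqP => n; elim: n t => [|n IHn] t;
  have [/orP[]/eqP->|nt] := boolP (is_target fin fail t);
  rewrite ?reach_n_fin ?reach_n_fail ?reach_n0 ?reach_nS //.
  by apply: sumr_ge0 => s _; rewrite mulr_ge0 ?val_ge0 ?reach_n_ge0.
by apply: ler_sum => s _; rewrite ler_wpM2l ?val_ge0.
Qed.

Lemma reach_n_cvg t : reach_n fin fail val ^~ t @ \oo --> Pval fin fail val t.
Proof.
have cvg_sup :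
    reach_n fin fail val ^~ t @ \oo --> sup (range (reach_n fin fail val ^~ t)).
  apply: nondecreasing_cvgn; first exact: reach_n_nondecreasing.
  by exists 1 => _ [n _ <-]; exact: reach_n_le1.
by rewrite /Pval (cvg_lim _ cvg_sup).
Qed.

Lemma Pval_cst t c : (forall n, reach_n fin fail val n t = c) -> Pval fin fail val t = c.
Proof. by move=> reach_c; rewrite /Pval (funext reach_c) lim_cst. Qed.

Lemma Pval_fin : Pval fin fail val fin = 1.
Proof. exact/Pval_cst/reach_n_fin. Qed.

Lemma Pval_fail : Pval fin fail val fail = 0.
Proof. exact/Pval_cst/reach_n_fail. Qed.

Lemma reach_n_unreachable n t : ~~ connect E t fin -> reach_n fin fail val n t = 0.
Proof.
have nontarget x : ~~ connect E x fin -> x != fail -> ~~ is_target fin fail x.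
  by move=> nr xfail; rewrite negb_or xfail andbT; apply: contraNneq nr => ->.
elim: n t => [|n IHn] t nr; have [->|/(nontarget t nr) nt] := eqVneq t fail;
  rewrite ?reach_n_fail ?reach_n0 //.
rewrite reach_nS //; apply: big1 => s _; have [_ val_eq0 _] := val_gp nt.
have [Ets|/val_eq0->] := boolP (E t s); last by rewrite mul0r.
by rewrite IHn ?mulr0 //; apply: contra nr => /(connect_trans (connect1 Ets)).
Qed.

Lemma Pval_unreachable t : ~~ connect E t fin -> Pval fin fail val t = 0.
Proof. by move=> nr; apply: Pval_cst => n; exact: reach_n_unreachable. Qed.

Lemma PvalE t : ~~ is_target fin fail t ->
  Pval fin fail val t = \sum_s val t s * Pval fin fail val s.
Proof.
move=> nt; have := @reach_n_cvg t; rewrite -cvg_shiftS.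
rewrite (funext (fun n => reach_nS n nt)) => /(cvg_unique (@Rhausdorff R)); apply.
apply: cvg_big => [|s _]; first exact: add_continuous.
by apply: cvgMl_tmp; exact: reach_n_cvg.
Qed.

End Reachability.

Definition harmonic_off (R : realType) (S : finType) (fin fail : S)
    (val : S -> S -> R) (u : S) (w : S -> R) : Prop :=
  forall t, ~~ is_target fin fail t -> t != u -> w t = \sum_s val t s * w s.

Section MaximumPrinciple.
Variables (R : realType) (S : finType) (E : rel S) (fin fail : S).
Hypotheses (fin_sink : forall t, ~~ E fin t) (fail_sink : forall t, ~~ E fail t).
Variable val : S -> S -> R.
Hypothesis val_gp : graph_preserving E fin fail val.
Hypothesis reach_fin : forall t, t != fail -> connect E t fin.
Variable u : S.

Lemma edge_nontarget x y : E x y -> ~~ is_target fin fail x.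
Proof.
by move=> Exy; rewrite negb_or; apply/andP; split; apply: contraTneq Exy => ->.
Qed.

Lemma harmonic_max_succ w t s : harmonic_off fin fail val u w ->
  (forall s, w s <= w t) -> t != u -> E t s -> w s = w t.
Proof.
move=> hw w_le tu Ets; have nt := edge_nontarget Ets.
have [val_gt0 _ val_sum1] := val_gp nt.
have gap0 : \sum_s' val t s' * (w t - w s') = 0.
  under eq_bigr do rewrite mulrBr.
  by rewrite sumrB -mulr_suml val_sum1 mul1r -hw // subrr.
have gap_ge0 s' : 0 <= val t s' * (w t - w s').
  by rewrite mulr_ge0 ?subr_ge0 // (val_ge0 val_gp).
have /eqP := psumr_eq0P (fun s' _ => gap_ge0 s') gap0 (i := s) isT.
by rewrite mulf_eq0 gt_eqF ?val_gt0 //= subr_eq0 => /eqP.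
Qed.

Lemma harmonic_max_reached w t : harmonic_off fin fail val u w ->
  w fin = 0 -> w fail = 0 -> (forall s, w s <= w t) -> w t = 0 \/ w t = w u.
Proof.
move=> hw wfin wfail w_le; have [->|tfail] := eqVneq t fail; first by left.
pose at_max x := (w x == w t) || (w u == w t).
have : at_max fin.
  apply: connect_invariant (reach_fin tfail) _ => [x y Exy|];
    last by rewrite /at_max eqxx.
  rewrite /at_max; have [_|wu] := eqVneq (w u) (w t); rewrite ?orbT // !orbF => /eqP wx.
  have xu : x != u by apply: contra_neq wu => <-.
  by rewrite (@harmonic_max_succ w x) // wx.
by case/orP=> /eqP <-; [left | right].
Qed.

Lemma harmonic_le0 w v : harmonic_off fin fail val u w ->
  w fin = 0 -> w fail = 0 -> v != u -> connect (avoid E u) v fin -> w v = w u ->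
  forall t, w t <= 0.
Proof.
move=> hw wfin wfail vu rv wv t.
have [m _ w_le] := arg_maxP w (isT : xpredT fin).
have {}w_le s : w s <= w m := w_le s isT.
have [wm0|wmu] := harmonic_max_reached hw wfin wfail w_le; first by rewrite -wm0 w_le.
pose on_max x := (x != u) && (w x == w m).
have /andP[_ /eqP wfin_max] : on_max fin.
  apply: connect_invariant rv _; last by rewrite /on_max vu wv wmu eqxx.
  move=> x y /andP[Exy yu] /andP[xu /eqP wx]; rewrite /on_max yu -wx /=.
  by rewrite (harmonic_max_succ (t := x) hw) // wx.
by rewrite -wfin wfin_max.
Qed.

Lemma harmonic_eq0 w v : harmonic_off fin fail val u w ->
  w fin = 0 -> w fail = 0 -> v != u -> connect (avoid E u) v fin -> w v = w u ->
  forall t, w t = 0.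
Proof.
move=> hw wfin wfail vu rv wv t.
have hNw : harmonic_off fin fail val u (fun x => - w x).
  by move=> x nt xu; rewrite hw // -sumrN; apply: eq_bigr => s _; rewrite mulrN.
apply/eqP; rewrite eq_le (harmonic_le0 hw wfin wfail vu rv wv) /= -oppr_le0.
by apply: (harmonic_le0 hNw) vu rv _ t; rewrite ?wfin ?wfail ?wv ?oppr0.
Qed.

End MaximumPrinciple.

Definition tilt (R : fieldType) (S : finType) (val : S -> S -> R) (u a : S) :
    S -> S -> R :=
  fun t => if t == u then fun s => (val u s + (s == a)%:R) / 2 else val t.

Lemma tilt_other (R : fieldType) (S : finType) (val : S -> S -> R) u a t :
  t != u -> tilt val u a t = val t.
Proof. by move=> tu; rewrite /tilt (negbTE tu). Qed.

Lemma tilt_row_sum (R : fieldType) (S : finType) (val : S -> S -> R) u a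
    (f : S -> R) :
  \sum_s tilt val u a u s * f s = (\sum_s val u s * f s + f a) / 2.
Proof.
transitivity ((\sum_s (val u s * f s + (s == a)%:R * f s)) / 2).
  by rewrite mulr_suml; apply: eq_bigr => s _; rewrite /tilt eqxx mulrAC mulrDl.
rewrite big_split /= [X in _ + X](bigD1 a) //= eqxx mul1r [X in f a + X]big1 ?addr0 //.
by move=> s /negbTE->; rewrite mul0r.
Qed.

Section Tilt.
Variables (R : realType) (S : finType) (E : rel S) (fin fail : S).
Hypothesis fin_neq_fail : fin != fail.

Lemma tilt_graph_preserving (val : S -> S -> R) u a :
  graph_preserving E fin fail val -> E u a -> graph_preserving E fin fail (tilt val u a).
Proof.
move=> gp Eua t nt; have [tu|tu] := eqVneq t u; last by rewrite tilt_other //; exact: gp.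
subst t; have [val_gt0 val_eq0 val_sum1] := gp u nt.
split=> [s Eus|s nEus|].
- by rewrite /tilt eqxx divr_gt0 // ltr_wpDr // val_gt0.
- have sa : (s == a) = false by apply: contraNF nEus => /eqP->.
  by rewrite /tilt eqxx sa val_eq0 // add0r mul0r.
- have := tilt_row_sum val u a (fun=> 1); under eq_bigr do rewrite mulr1.
  by under [X in _ = (X + _) / _]eq_bigr do rewrite mulr1; rewrite val_sum1 => ->; lra.
Qed.

Lemma Pval_sub_harmonic_off (val val' : S -> S -> R) u :
  graph_preserving E fin fail val -> graph_preserving E fin fail val' ->
  (forall t, t != u -> val' t = val t) ->
  harmonic_off fin fail val u (fun t => Pval fin fail val' t - Pval fin fail val t).
Proof.
move=> gp gp' eq_val t nt tu.
rewrite (PvalE fin_neq_fail gp' nt) (PvalE fin_neq_fail gp nt) -sumrB.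
by apply: eq_bigr => s _; rewrite eq_val // mulrBr.
Qed.

End Tilt.

Section ClassExit.
Variables (R : realType) (S : finType) (E : rel S) (fin fail : S).
Hypothesis fin_neq_fail : fin != fail.
Hypotheses (fin_sink : forall t, ~~ E fin t) (fail_sink : forall t, ~~ E fail t).
Hypothesis class_fail : eq_class R E fin fail fail = [set fail].

Lemma eq_classP s t :
  reflect (Defs.equiv R E fin fail s t) (t \in eq_class R E fin fail s).
Proof. by rewrite inE; apply: asboolP. Qed.

Lemma reach_fin t : t != fail -> connect E t fin.
Proof.
move=> tfail; apply: contraNT tfail => nr.
have : t \in eq_class R E fin fail fail.
  apply/eq_classP => val gp.
  by rewrite Pval_fail // (Pval_unreachable fin_neq_fail gp nr).
by rewrite class_fail inE.
Qed.

Lemma exit_separates s u v :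
  is_exit E (eq_class R E fin fail s) u -> v \in eq_class R E fin fail s -> v != u ->
  ~~ connect (avoid E u) v fin.
Proof.
case/is_exitP=> /eq_classP s_u [a Eua /eq_classP s_na] /eq_classP s_v vu.
apply/negP => rv; move/existsNP: s_na => [val /not_implyP[gp Pval_sa]].
have gp' := tilt_graph_preserving gp Eua.
have Pval_tilt t : Pval fin fail (tilt val u a) t = Pval fin fail val t.
  apply/eqP; rewrite -subr_eq0; apply/eqP; move: t.
  apply: (harmonic_eq0 fin_sink fail_sink gp reach_fin _ _ _ vu rv).
  - by apply: (Pval_sub_harmonic_off fin_neq_fail gp gp') => t; exact: tilt_other.
  - by rewrite !Pval_fin subrr.
  - by rewrite !(Pval_fail fin_neq_fail) subrr.
  - by rewrite -(s_v _ gp) -(s_v _ gp') -(s_u _ gp) -(s_u _ gp').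
have nt := edge_nontarget fin_sink fail_sink Eua.
have : Pval fin fail val u = (Pval fin fail val u + Pval fin fail val a) / 2.
  rewrite -{1}Pval_tilt (PvalE fin_neq_fail gp' nt) tilt_row_sum Pval_tilt.
  by under eq_bigr do rewrite Pval_tilt; rewrite -(PvalE fin_neq_fail gp nt).
by move=> half; apply: Pval_sa; rewrite (s_u _ gp); lra.
Qed.

End ClassExit.

Local Close Scope ring_scope.

Theorem theorem7 (R : realType) (S : finType) (E : rel S) (fin fail : S) :
  fin != fail ->
  (* targets have no outgoing edges *)
  (forall t, ~~ E fin t) -> (forall t, ~~ E fail t) ->
  (* no self-loops *)
  (forall s, ~~ E s s) ->
  (* every non-target state has exactly two successors *)
  (forall s, ~~ is_target fin fail s -> #|[set t | E s t]| = 2) ->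
  (* the classes of fin and fail are singletons *)
  eq_class R E fin fail fin = [set fin] ->
  eq_class R E fin fail fail = [set fail] ->
  forall s : S,
    fin \notin eq_class R E fin fail s ->
    fail \notin eq_class R E fin fail s ->
    #|[set u | is_exit E (eq_class R E fin fail s) u]| = 1.
Proof.
move=> fin_neq_fail fin_sink fail_sink _ _ _ class_fail s finC failC.
set C := eq_class R E fin fail s.
have reachC u : u \in C -> connect E u fin.
  by move=> uC; apply: (reach_fin fin_neq_fail class_fail); apply: contraTneq uC => ->.
have sC : s \in C by apply/eq_classP.
have [u0 exit_u0] := connect_exit (reachC s sC) sC finC.
suff exit_uniq u : is_exit E C u -> u = u0.
  rewrite (_ : [set u | is_exit E C u] = [set u0]) ?cards1 //.
  by apply/setP => u; rewrite !inE; apply/idP/eqP => [/exit_uniq|->].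
move=> exit_u; apply/eqP/negPn/negP => u_neq_u0.
have u0_neq_u : u0 != u by rewrite eq_sym.
have [/is_exitP[uC _] /is_exitP[u0C _]] := (exit_u, exit_u0).
have separates := exit_separates fin_neq_fail fin_sink fail_sink class_fail.
case/orP: (connect_avoid_either u0 (reachC u uC)); apply/negP.
  exact: separates exit_u0 uC u_neq_u0.
exact: separates exit_u u0C u0_neq_u.
Qed.
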